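(* Let $\mathcal{M}\subseteq \mathcal{L}_n^+$ be a linear Markov model. Then $\mathcal{M}=\operatorname{span}_{\mathbb{R}}(\mathcal{M})\cap \mathcal{L}_n^+$, and the following are equivalent: (1) $\mathcal{M}$ is uniformization stable; (2) $\operatorname{span}_{\mathbb{R}}(\mathcal{M})$ is a Jordan algebra, i.e. $AB+BA\in \operatorname{span}_{\mathbb{R}}(\mathcal{M})$ for all $A,B\in \operatorname{span}_{\mathbb{R}}(\mathcal{M})$.
   Context: Let $n\ge 1$, let $\mathbf{1}\in\mathbb{R}^n$ be the all-ones column vector and $I_n$ the identity matrix. Let $\mathcal{L}_n=\{Q\in \mathrm{Mat}_n(\mathbb{R}): Q\mathbf{1}=0\}$ be the zero row sum matrices. A rate matrix is a $Q\in\mathcal{L}_n$ whose off-diagonal entries are all nonnegative; $\mathcal{L}_n^+$ denotes the set of rate matrices. A Markov model is any subset $\mathcal{M}\subseteq\mathcal{L}_n^+$; it is linear if $\mathcal{M}=\mathcal{L}\cap\mathcal{L}_n^+$ for some linear subspace $\mathcal{L}\subseteq\mathcal{L}_n$. A Markov model $\mathcal{M}$ is uniformization stable if for every $Q\in\mathcal{M}$ and every $t\ge 0$ there exists $\hat Q\in\mathcal{M}$ with $e^{Qt}-I_n=\hat Q$. A linear subspace of $\mathrm{Mat}_n(\mathbb{R})$ is a (matrix) Jordan algebra if it is closed under the product $A\odot B:=AB+BA$. *)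

From HB Require Import structures.
From mathcomp Require Import all_boot all_order all_algebra.
From mathcomp Require Import all_classical all_reals all_analysis.
Set Implicit Arguments. Unset Strict Implicit. Unset Printing Implicit Defensive.
Import Order.TTheory GRing.Theory Num.Theory.
Local Open Scope classical_set_scope.
Local Open Scope ring_scope.

Section Defs.
Variables (R : realType) (n : nat).

Definition ones : 'cV[R]_n := const_mx 1.

Definition zero_row_sum : set 'M[R]_n := [set Q | Q *m ones = 0].

Definition rate_matrices : set 'M[R]_n :=
  [set Q | Q *m ones = 0 /\ forall i j : 'I_n, i != j -> 0 <= Q i j].

Definition is_subspace (L : set 'M[R]_n) : Prop :=
  L 0 /\ (forall A B, L A -> L B -> L (A + B)) /\
  (forall (c : R) A, L A -> L (c *: A)).

Definition mspan (S : set 'M[R]_n) : set 'M[R]_n :=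
  [set A | exists (k : nat) (c : 'I_k -> R) (B : 'I_k -> 'M[R]_n),
      (forall i, S (B i)) /\ A = \sum_(i < k) c i *: B i].

Definition expmx (A : 'M[R]_n) : 'M[R]_n :=
  \matrix_(i, j) lim ((fun k : nat =>
      (\sum_(l < k) (l`!%:R)^-1 *: A ^+ l) i j : R^o) @ \oo).

Definition unif_stable (M : set 'M[R]_n) : Prop :=
  forall Q, M Q -> forall t : R, 0 <= t ->
    exists Qh, M Qh /\ expmx (t *: Q) - 1%:M = Qh.

Definition jordan_closed (L : set 'M[R]_n) : Prop :=
  forall A B, L A -> L B -> L (A *m B + B *m A).

End Defs.

From HB Require Import structures.
From mathcomp Require Import all_boot all_order all_algebra.
From mathcomp Require Import all_classical all_reals all_analysis.
From mathcomp Require Import zify ring lra.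
Import Order.TTheory GRing.Theory Num.Theory.
Import numFieldNormedType.Exports.
Set Implicit Arguments. Unset Strict Implicit. Unset Printing Implicit Defensive.
Local Open Scope classical_set_scope.
Local Open Scope ring_scope.

(* Let M = L ∩ L_n^+ where L is a subspace of zero row sum matrices.  Since
   M ⊆ span M ⊆ L, the identity M = span M ∩ L_n^+ is immediate.  For the
   equivalence we use three analytic facts about expmx, proved entrywise
   from the partial sums of the exponential series:
   - exp(A) - 1 is a limit of combinations of positive powers of A, and
     linear subspaces of 'M_n are closed under entrywise limits;
   - if A has nonnegative off-diagonal entries, exp(A) >= 0 entrywise;
   - (exp(tQ) - 1 - tQ) / t^2 tends to Q^2 / 2 as t tends to 0.
   (1) => (2): by the third fact the squares of elements of M lie in span M;
   M is closed under addition, so polarization and bilinearity make span M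
   a Jordan algebra.  (2) => (1): a Jordan algebra contains all positive
   powers of its elements, so exp(tQ) - 1 lies in span M ⊆ L, and by the
   second fact it is a rate matrix, hence it lies in M. *)

Section Subspaces.
Variables (R : realType) (n : nat).
Implicit Types (S V : set 'M[R]_n) (A X Y : 'M[R]_n).

Lemma subspace_sum V (I : finType) (F : I -> 'M[R]_n) :
  is_subspace V -> (forall i, V (F i)) -> V (\sum_i F i).
Proof. by move=> [V0 [VD _]] VF; elim/big_ind: _. Qed.

Lemma subspace_sub V X Y : is_subspace V -> V X -> V Y -> V (X - Y).
Proof. by move=> [_ [VD VZ]] VX VY; rewrite -scaleN1r; apply/VD/VZ. Qed.

Lemma mspan_in S : S `<=` mspan S.
Proof.
move=> X SX; exists 1%N, (fun=> 1), (fun=> X); split=> //.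
by rewrite big_ord1 scale1r.
Qed.

Lemma mspan_min S V : is_subspace V -> S `<=` V -> mspan S `<=` V.
Proof.
move=> hV SV _ [k [c [B [SB ->]]]]; apply: subspace_sum => // i.
by case: hV => _ [_ VZ]; apply/VZ/SV.
Qed.

Lemma mspan_subspace S : is_subspace (mspan S).
Proof.
split; first by exists 0%N, (fun=> 0), (fun=> 0); split; [case | rewrite big_ord0].
split=> [_ _ [k1 [c1 [B1 [SB1 ->]]]] [k2 [c2 [B2 [SB2 ->]]]] |
         a _ [k [c [B [SB ->]]]]].
  pose glue T (f1 : 'I_k1 -> T) (f2 : 'I_k2 -> T) (i : 'I_(k1 + k2)) :=
    match fintype.split i with inl i1 => f1 i1 | inr i2 => f2 i2 end.
  exists (k1 + k2)%N, (glue _ c1 c2), (glue _ B1 B2); split.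
    by move=> i; rewrite /glue; case: (fintype.split i).
  rewrite big_split_ord /glue; congr (_ + _); apply: eq_bigr => i _.
    by rewrite -[lshift _ _]/(unsplit (inl _)) unsplitK.
  by rewrite -[rshift _ _]/(unsplit (inr _)) unsplitK.
exists k, (fun i => a * c i), B; split=> //.
by rewrite scaler_sumr; apply: eq_bigr => i _; rewrite scalerA.
Qed.

(* Every linear subspace of the finite-dimensional space 'M_n is the carrier
   of a {vspace}: starting from 0, enlarge a subspace of V by one vector of V
   at a time; the dimension increases each time and is bounded. *)
Lemma subspace_vspace V :
  is_subspace V -> exists W : {vspace 'M[R]_n}, forall X, V X <-> X \in W.
Proof.
move=> hV.
have grow (W : {vspace 'M[R]_n}) :
    (forall X, X \in W -> V X) -> ~ (forall X, V X <-> X \in W) ->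
    exists2 W' : {vspace 'M[R]_n},
      (forall X, X \in W' -> V X) & (\dim W < \dim W')%N.
  move=> WV neW.
  have [x [Vx xW]] : exists x, V x /\ x \notin W.
    apply: contrapT => noext; apply: neW => X; split=> [VX|]; last exact: WV.
    by apply: contrapT => /negP XW; apply: noext; exists X.
  exists (W + <[x]>)%VS.
    move=> _ /memv_addP [u uW [_ /vlineP [a ->] ->]].
    by case: hV => _ [VD VZ]; apply: VD; [exact: WV | exact: VZ].
  rewrite (ltn_leqif (dimv_leqif_sup (addvSl W <[x]>%VS))).
  apply/negP => sub; move/negP: xW; apply.
  by apply: (subvP sub); apply: (subvP (addvSr W _)); exact: memv_line.
suff: forall k (W : {vspace 'M[R]_n}), (forall X, X \in W -> V X) ->
    (\dim {:'M[R]_n} - \dim W <= k)%N ->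
    exists W : {vspace 'M[R]_n}, forall X, V X <-> X \in W.
  move=> from; apply: (from _ 0%VS _ (leq_subr _ _)) => X.
  by rewrite memv0 => /eqP ->; case: hV.
elim=> [|k IH] W WV Hk.
all: have [|/(grow W WV) [W' W'V ltW]] := pselect (forall X, V X <-> X \in W).
all: try by exists W.
all: have leW' : (\dim W' <= \dim {:'M[R]_n})%N := dimvS (subvf W').
  by move: Hk ltW leW'; lia.
by apply: (IH W') => //; move: Hk ltW leW'; lia.
Qed.

Lemma projv_entry (W : {vspace 'M[R]_n}) Y i j :
  projv W Y i j = \sum_k \sum_l Y k l * projv W (delta_mx k l) i j.
Proof.
rewrite {1}(matrix_sum_delta Y) linear_sum summxE; apply: eq_bigr => k _.
rewrite linear_sum summxE; apply: eq_bigr => l _.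
by rewrite linearZ mxE.
Qed.

(* Linear subspaces of 'M_n are closed under entrywise limits: the projection
   onto the subspace fixes the terms of the sequence, and its entries are
   linear in the entries of the argument, hence pass to the limit. *)
Lemma subspace_closed V (u : nat -> 'M[R]_n) X :
  is_subspace V -> (forall m, V (u m)) ->
  (forall i j, (fun m => u m i j) @ \oo --> X i j) -> V X.
Proof.
move=> hV Vu cu; have [W VW] := subspace_vspace hV.
suff <- : projv W X = X by apply/VW; apply: memv_proj.
apply/matrixP => i j.
have cproj : (fun m => u m i j) @ \oo --> projv W X i j.
  have -> : (fun m => u m i j) =
      (fun m => \sum_k \sum_l u m k l * projv W (delta_mx k l) i j).
    by apply/funext => m; rewrite -projv_entry projv_id //; apply/VW.
  rewrite projv_entry; apply: (cvg_big add_continuous) => // k _.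
  apply: (cvg_big add_continuous) => // l _; exact: cvgMr_tmp.
exact: (cvg_unique _ cproj (cu i j)).
Qed.

Lemma jordan_partner_subspace V Y :
  is_subspace V -> is_subspace [set X | V (X *m Y + Y *m X)].
Proof.
move=> [V0 [VD VZ]]; split; first by rewrite /= mul0mx mulmx0 addr0.
split=> [X1 X2 /= V1 V2 | c X /= VX].
  by rewrite mulmxDl mulmxDr addrACA; exact: VD.
by rewrite -scalemxAl -scalemxAr -scalerDr; exact: VZ.
Qed.

(* Polarization: if S is closed under addition and the square of each of its
   elements lies in span S, then span S is a Jordan algebra, since
   XY + YX = (X + Y)^2 - X^2 - Y^2 and the Jordan product is bilinear. *)
Lemma jordan_closed_span S :
  (forall X Y, S X -> S Y -> S (X + Y)) ->
  (forall X, S X -> mspan S (X *m X)) -> jordan_closed (mspan S).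
Proof.
move=> SD Ssq.
have hV := mspan_subspace S.
have SJ X Y : S X -> S Y -> mspan S (X *m Y + Y *m X).
  move=> SX SY.
  have expand : (X + Y) *m (X + Y) = X *m Y + Y *m X + Y *m Y + X *m X.
    by rewrite mulmxDl !mulmxDr [RHS]addrC !addrA.
  have := subspace_sub hV
    (subspace_sub hV (Ssq _ (SD _ _ SX SY)) (Ssq _ SX)) (Ssq _ SY).
  by rewrite expand !addrK.
move=> A B VA VB.
have JA X : S X -> mspan S (A *m X + X *m A).
  move=> SX; apply: (mspan_min (jordan_partner_subspace X hV) _ VA) => Z SZ.
  exact: SJ.
rewrite addrC; apply: (mspan_min (jordan_partner_subspace A hV) _ VB) => Z SZ /=.
by rewrite addrC; apply: JA.
Qed.

(* In a Jordan algebra every positive power of an element A stays inside,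
   since A^(k+2) = (A A^(k+1) + A^(k+1) A) / 2. *)
Lemma jordan_closed_pow V A :
  is_subspace V -> jordan_closed V -> V A -> forall k, V (A ^+ k.+1).
Proof.
move=> [_ [_ VZ]] VJ VA; elim=> [|k IH]; first by rewrite expr1.
have -> : A ^+ k.+2 = 2^-1 *: (A *m A ^+ k.+1 + A ^+ k.+1 *m A).
  rewrite mulmxE -exprS -exprSr -mulr2n -[A ^+ k.+2 *+ 2]scaler_nat scalerA.
  by rewrite mulVf ?scale1r // pnatr_eq0.
by apply/VZ/VJ.
Qed.

End Subspaces.

Section RealLimits.
Variable R : realType.

Lemma lim_ge0 (u : nat -> R) l : (forall N, 0 <= u N) -> u @ \oo --> l -> 0 <= l.
Proof.
move=> u0 cu; rewrite -(cvg_lim (@Rhausdorff R) cu).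
by apply: limr_ge; [exact: (cvgP _ cu) | exact: nearW].
Qed.

Lemma lim_dist_le (u : nat -> R) l c K :
  u @ \oo --> l -> (forall N, `|u N - c| <= K) -> `|l - c| <= K.
Proof.
move=> cu uK; rewrite -subr_ge0.
apply: (@lim_ge0 (fun N => K - `|u N - c|)) => [N|]; first by rewrite subr_ge0.
apply: cvgB; first exact: cvg_cst.
by apply: cvg_norm; apply: cvgB => //; exact: cvg_cst.
Qed.

(* For x >= 0 the partial sums of the exponential series increase to exp x. *)
Lemma exp_series_le (x : R) k : 0 <= x -> series (exp_coeff x) k <= expR x.
Proof.
move=> x0; apply: nondecreasing_cvgn_le; last exact: is_cvg_series_exp_coeff.
apply/nondecreasing_seqP => m; rewrite seriesSr lerDl; exact: exp_coeff_ge0.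
Qed.

Lemma exp_series_neg_bound (c : R) k :
  0 <= c -> `|series (exp_coeff (- c)) k| <= expR c.
Proof.
move=> c0; apply: le_trans (exp_series_le k c0).
rewrite /series /=; apply: le_trans (ler_norm_sum _ _ _) _.
apply: ler_sum => i _; rewrite /exp_coeff /=.
by rewrite normrM normfV normrX normrN !ger0_norm.
Qed.

End RealLimits.

Section MatrixExponential.
Variables (R : realType) (n : nat).
Implicit Types (A : 'M[R]_n).

Definition exp_partial A (N : nat) : 'M[R]_n :=
  \sum_(l < N) (l`!%:R)^-1 *: A ^+ l.

Definition l1norm A : R := \sum_k \sum_l `|A k l|.

Lemma l1norm_ge0 A : 0 <= l1norm A.
Proof. by apply: sumr_ge0 => k _; apply: sumr_ge0. Qed.

Lemma entry_le_l1norm A i j : `|A i j| <= l1norm A.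
Proof.
rewrite /l1norm (bigD1 i) //= (bigD1 j) //= -addrA lerDl.
by apply: addr_ge0; apply: sumr_ge0 => // k _; apply: sumr_ge0.
Qed.

(* |(A^l)_ij| <= (n |A|_1)^l, so the exponential series is dominated
   entrywise by the scalar series of exp (n |A|_1). *)
Lemma pow_entry_bound A l i j : `|(A ^+ l) i j| <= (n%:R * l1norm A) ^+ l.
Proof.
elim: l i j => [|l IH] i j.
  by rewrite expr0 !mxE; case: (i == j); rewrite ?normr1 ?normr0.
rewrite exprSr -mulmxE mxE; apply: le_trans (ler_norm_sum _ _ _) _.
apply: (@le_trans _ _ (\sum_(k < n) (n%:R * l1norm A) ^+ l * l1norm A)).
  apply: ler_sum => k _; rewrite normrM.
  by apply: ler_pM => //; exact: entry_le_l1norm.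
rewrite sumr_const card_ord.
suff -> : ((n%:R * l1norm A) ^+ l * l1norm A) *+ n = (n%:R * l1norm A) ^+ l.+1
  by [].
by rewrite -mulr_natr exprSr; ring.
Qed.

Lemma exp_partial_cvg A i j :
  (fun N => exp_partial A N i j) @ \oo --> expmx A i j.
Proof.
rewrite /expmx mxE.
suff cv : cvgn (fun N => exp_partial A N i j) by [].
have -> : (fun N => exp_partial A N i j) =
    series (fun l => (l`!%:R)^-1 * (A ^+ l) i j).
  apply/funext => N; rewrite /exp_partial /series /= summxE big_mkord.
  by apply: eq_bigr => l _; rewrite mxE.
apply: normed_cvg.
apply: (@series_le_cvg _ _ (exp_coeff (n%:R * l1norm A))).
- by move=> k; rewrite /= normr_ge0.
- by move=> k; apply/exp_coeff_ge0/mulr_ge0 => //; exact: l1norm_ge0.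
- move=> k /=; rewrite normrM ger0_norm ?invr_ge0 // mulrC.
  by apply: ler_wpM2r; [rewrite invr_ge0 | exact: pow_entry_bound].
- exact: is_cvg_series_exp_coeff.
Qed.

(* exp(A) - 1 is a limit of combinations of positive powers of A, hence it
   lies in any subspace containing them. *)
Lemma expmx_sub1_in V A :
  is_subspace V -> (forall k, V (A ^+ k.+1)) -> V (expmx A - 1%:M).
Proof.
move=> hV VA.
apply: (@subspace_closed _ _ _ (fun m => exp_partial A m.+1 - 1%:M)) => //.
  move=> m; rewrite /exp_partial big_ord_recl /= expr0 invr1 scale1r.
  rewrite addrAC subrr add0r.
  by apply: subspace_sum => // l; case: hV => _ [_ VZ]; apply: VZ.
move=> i j; rewrite mxE.
have := @exp_partial_cvg A i j; rewrite -(cvg_shiftn 1) => cv.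
have -> : (fun m => (exp_partial A m.+1 - 1%:M) i j) =
    (fun m => exp_partial A (m + 1) i j + (- 1%:M) i j).
  by apply/funext => m; rewrite addn1 mxE.
by apply: cvgD => //; exact: cvg_cst.
Qed.

End MatrixExponential.

(* Write A = P - c I with P >= 0 and c >= 0; the
   exponential series of P - c I is the Cauchy product of that of P with the
   scalar series of exp(-c), whose partial sums are eventually positive. *)
Section ExponentialPositivity.
Variables (R : realType) (n : nat).
Implicit Types (A P : 'M[R]_n) (c : R).

Lemma pow_ge0 P : (forall i j, 0 <= P i j) -> forall l i j, 0 <= (P ^+ l) i j.
Proof.
move=> P0; elim=> [|l IH] i j; first by rewrite expr0 mxE; case: (i == j).
by rewrite exprSr -mulmxE mxE; apply: sumr_ge0 => k _; exact: mulr_ge0.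
Qed.

Lemma scalar_mx_pow c k : (c%:M : 'M[R]_n) ^+ k = (c ^+ k)%:M.
Proof.
elim: k => [|k IH]; first by rewrite !expr0.
by rewrite !exprS IH -mulmxE -scalar_mxM.
Qed.

Lemma exp_term_shift P c l :
  (l`!%:R)^-1 *: (P + (- c)%:M) ^+ l =
  \sum_(i < l.+1) ((- c) ^+ i / i`!%:R) *: (((l - i)`!%:R)^-1 *: P ^+ (l - i)).
Proof.
rewrite exprDn_comm; last by rewrite /GRing.comm -mulmxE scalar_mxC.
rewrite scaler_sumr; apply: eq_bigr => i _.
rewrite scalar_mx_pow -mulmxE mul_mx_scalar scalerMnl !scalerA -mulr_natr.
congr (_ *: _).
have fact_neq0 k : (k`!%:R : R) != 0 by rewrite pnatr_eq0 -lt0n fact_gt0.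
have il : (i <= l)%N by rewrite -ltnS.
have -> : (l`!%:R : R) = 'C(l, i)%:R * i`!%:R * (l - i)`!%:R.
  by rewrite -!natrM -mulnA bin_fact.
have binom_neq0 : ('C(l, i)%:R : R) != 0 by rewrite pnatr_eq0 -lt0n bin_gt0.
by field; rewrite binom_neq0 !fact_neq0.
Qed.

Lemma exp_partial_shift P c N :
  exp_partial (P + (- c)%:M) N =
  \sum_(j < N) series (exp_coeff (- c)) (N - j)%N *: ((j`!%:R)^-1 *: P ^+ j).
Proof.
elim: N => [|N IH]; first by rewrite /exp_partial !big_ord0.
rewrite /exp_partial big_ord_recr /= -/(exp_partial _ N) IH exp_term_shift.
rewrite [in RHS]big_ord_recr /= subSnn.
rewrite [\sum_(i < N.+1) _](reindex_inj rev_ord_inj) /= big_ord_recr /= subnn subn0.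
have -> : series (exp_coeff (- c)) 1 = (- c) ^+ 0 / 0`!%:R.
  by rewrite seriesSr /series /= big_geq // add0r.
rewrite addrA; congr (_ + _); rewrite -big_split /=; apply: eq_bigr => j _.
have jN : (j <= N)%N := ltnW (ltn_ord j).
by rewrite subSS subKn // subSn // seriesSr scalerDl.
Qed.

Lemma expmx_shift_ge0 P c :
  0 <= c -> (forall i j, 0 <= P i j) -> forall i k, 0 <= expmx (P + (- c)%:M) i k.
Proof.
move=> c0 P0 i k.
pose s := series (exp_coeff (- c)).
have [K0 _ s_pos] :=
  cvgr_gt _ (@is_cvg_series_exp_coeff R (- c)) 0 (expR_gt0 (- c)).
pose a j := (j`!%:R)^-1 * (P ^+ j) i k.
have a0 j : 0 <= a j by apply: mulr_ge0; [rewrite invr_ge0 | exact: pow_ge0].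
have shiftE N : exp_partial (P + (- c)%:M) N i k = \sum_(j < N) s (N - j)%N * a j.
  by rewrite exp_partial_shift summxE; apply: eq_bigr => j _; rewrite !mxE.
have partialE N : exp_partial P N i k = \sum_(j < N) a j.
  by rewrite /exp_partial summxE; apply: eq_bigr => j _; rewrite !mxE.
(* The first N coefficients carry s_m with m > K0, hence are nonnegative;
   the last K0 ones have |s_m| <= exp c, compensated by the added tail. *)
have shifted_ge0 N : 0 <= exp_partial (P + (- c)%:M) (N + K0) i k +
    expR c * (exp_partial P (N + K0) i k - exp_partial P N i k).
  rewrite shiftE !partialE big_split_ord /= [X in X - _]big_split_ord /=.
  rewrite [_ + _ - _]addrAC subrr add0r mulr_sumr -addrA -big_split /=.
  apply: addr_ge0; apply: sumr_ge0 => j _.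
    apply/mulr_ge0/a0/ltW/(s_pos (N + K0 - j)%N) => /=.
    by have := ltn_ord j; lia.
  rewrite -mulrDl; apply: mulr_ge0 => //.
  rewrite -lerBlDr sub0r lerNl; apply: le_trans (exp_series_neg_bound _ c0).
  by rewrite -normrN; exact: ler_norm.
apply: (lim_ge0 shifted_ge0).
rewrite -[X in _ --> X]addr0 -(mulr0 (expR c)) -(subrr (expmx P i k)).
have cvA := @exp_partial_cvg R n (P + (- c)%:M) i k.
rewrite -(cvg_shiftn K0) in cvA.
have cvP := @exp_partial_cvg R n P i k.
have cvP_shift := cvP; rewrite -(cvg_shiftn K0) in cvP_shift.
apply: cvgD; first exact: cvA.
by apply: cvgMl_tmp; apply: cvgB; [exact: cvP_shift | exact: cvP].
Qed.

(* Shift A = (A + c I) - c I with c = sum_l |A_ll|, so that A + c I >= 0. *)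
Lemma expmx_ge0 A :
  (forall i j, i != j -> 0 <= A i j) -> forall i k, 0 <= expmx A i k.
Proof.
move=> A0 i k.
pose c := \sum_l `|A l l|.
have c0 : 0 <= c by apply: sumr_ge0.
have -> : A = (A + c%:M) + (- c)%:M.
  by apply/matrixP => p q; rewrite !mxE; case: (p == q); rewrite ?addrK ?addr0.
apply: expmx_shift_ge0 => // p q; rewrite !mxE.
have [->|pq] := eqVneq p q; last by rewrite mulr0n addr0; exact: A0.
have diag_le : `|A q q| <= c by rewrite /c (bigD1 q) //= lerDl sumr_ge0.
have := ler_norm (- A q q); rewrite normrN mulr1n; lra.
Qed.

End ExponentialPositivity.

Section ExponentialTaylor.
Variables (R : realType) (n : nat).
Implicit Types (Q : 'M[R]_n) (t : R).

Lemma scale_pow t Q k : (t *: Q) ^+ k = t ^+ k *: Q ^+ k.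
Proof.
elim: k => [|k IH]; first by rewrite !expr0 scale1r.
by rewrite !exprS IH -!mulmxE -scalemxAl -scalemxAr scalerA.
Qed.

Lemma expmx_taylor2 Q t i j : 0 < t -> t <= 1 ->
  `| expmx (t *: Q) i j - (1%:M i j + t * Q i j + t ^+ 2 / 2 * (Q *m Q) i j) |
    <= t ^+ 3 * expR (n%:R * l1norm Q).
Proof.
move=> t0 t1; have t0' := ltW t0.
have nQ0 : 0 <= n%:R * l1norm Q by apply: mulr_ge0 => //; exact: l1norm_ge0.
have := @exp_partial_cvg R n (t *: Q) i j; rewrite -(cvg_shiftn 3) => cv.
apply: (lim_dist_le cv) => N /=.
rewrite addnC /exp_partial big_split_ord /= !big_ord_recr big_ord0 /= add0r.
have quadratic : 0`!%:R^-1 *: (t *: Q) ^+ 0 + 1`!%:R^-1 *: (t *: Q) ^+ 1 +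
    2`!%:R^-1 *: (t *: Q) ^+ 2 = 1%:M + t *: Q + (t ^+ 2 / 2) *: (Q *m Q).
  rewrite !scale_pow expr0 !expr1 [Q ^+ 2]expr2 -mulmxE.
  rewrite (_ : 0`! = 1)%N // (_ : 1`! = 1)%N // (_ : 2`! = 2)%N //.
  by rewrite invr1 !scale1r scalerA mulrC.
rewrite quadratic !mxE summxE [X in `|X - _|]addrC addrK.
apply: le_trans (ler_norm_sum _ _ _) _.
apply: (@le_trans _ _ (\sum_(l < N) t ^+ 3 *
    (((3 + l)%N`!%:R)^-1 * (n%:R * l1norm Q) ^+ (3 + l)%N))).
  apply: ler_sum => l _; rewrite scale_pow.
  move: (pow_entry_bound Q (3 + l)%N i j).
  set Qk := Q ^+ (3 + l)%N => Qbound; clearbody Qk.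
  rewrite !mxE normrM normrM normrX ger0_norm ?invr_ge0 // (ger0_norm t0').
  have t_pow : t ^+ (3 + l) <= t ^+ 3.
    by rewrite exprD ler_piMr ?exprn_ge0 ?exprn_ile1.
  rewrite [X in _ <= X]mulrCA; apply: ler_wpM2l; first by rewrite invr_ge0.
  by apply: ler_pM => //; exact: exprn_ge0.
rewrite -mulr_sumr; apply: ler_wpM2l; first exact: exprn_ge0.
apply: le_trans (exp_series_le (3 + N)%N nQ0).
rewrite /series exp_coeffE /= big_mkord big_split_ord lerDr.
by apply: sumr_ge0 => k _; apply: mulr_ge0; [rewrite invr_ge0 | exact: exprn_ge0].
Qed.

Lemma expmx_second_order_limit Q i j :
  (fun m => ((harmonic m) ^- 2 *:
      (expmx (harmonic m *: Q) - 1%:M - harmonic m *: Q)) i j)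
    @ \oo --> (2^-1 *: (Q *m Q)) i j.
Proof.
set K := expR (n%:R * l1norm Q).
set c := (2^-1 *: (Q *m Q)) i j.
apply: (@squeeze_cvgr _ _ _ _ (fun m => c - harmonic m * K)
                              (fun m => c + harmonic m * K)).
- apply: nearW => m; rewrite -ler_distl.
  set t := harmonic m.
  have t0 : 0 < t by exact: harmonic_gt0.
  have t1 : t <= 1 by rewrite /t /harmonic /= invf_le1 ?ltr0Sn // ler1n.
  have tn0 : t != 0 by rewrite gt_eqF.
  have entryE : (t ^- 2 *: (expmx (t *: Q) - 1%:M - t *: Q)) i j =
      t ^- 2 * (expmx (t *: Q) i j - 1%:M i j - t * Q i j) by rewrite !mxE.
  have cE : c = 2^-1 * (Q *m Q) i j by rewrite /c mxE.
  rewrite entryE cE; move: (expmx_taylor2 Q i j t0 t1).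
  set E := expmx _ i j; set o := 1%:M i j; set q := Q i j; set qq := (Q *m Q) i j.
  have -> : t ^- 2 * (E - o - t * q) - 2^-1 * qq =
     t ^- 2 * (E - (o + t * q + t ^+ 2 / 2 * qq)) by field.
  have tinv0 : 0 <= t ^- 2 by rewrite invr_ge0 exprn_ge0 // ltW.
  rewrite normrM (ger0_norm tinv0) => remainder.
  have -> : t * K = t ^- 2 * (t ^+ 3 * K) by field.
  exact: ler_wpM2l.
- rewrite -[X in _ --> X]subr0 -(mul0r K); apply: cvgB; first exact: cvg_cst.
  exact: cvgMr_tmp cvg_harmonic.
- rewrite -[X in _ --> X]addr0 -(mul0r K); apply: cvgD; first exact: cvg_cst.
  exact: cvgMr_tmp cvg_harmonic.
Qed.

End ExponentialTaylor.

Section LinearMarkovModel.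
Variables (R : realType) (n : nat) (L : set 'M[R]_n).
Hypothesis subspace_L : is_subspace L.
Local Notation M := (L `&` @rate_matrices R n).

Lemma model_span_sub : mspan M `<=` L.
Proof. by apply: mspan_min => // X []. Qed.

Lemma model_span_rate : M = mspan M `&` @rate_matrices R n.
Proof.
apply/seteqP; split=> X; first by move=> MX; split; [exact: mspan_in | case: MX].
by move=> [VX rX]; split=> //; exact: model_span_sub.
Qed.

Lemma model_add X Y : M X -> M Y -> M (X + Y).
Proof.
move=> [LX [rX oX]] [LY [rY oY]]; split.
  by case: subspace_L => _ [LD _]; exact: LD.
split; first by rewrite mulmxDl rX rY addr0.
by move=> i j ij; rewrite mxE addr_ge0 ?oX ?oY.
Qed.

Lemma model_scale (t : R) Q : 0 <= t -> M Q -> M (t *: Q).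
Proof.
move=> t0 [LQ [rQ oQ]]; split; first by case: subspace_L => _ [_ LZ]; exact: LZ.
split; first by rewrite -scalemxAl rQ scaler0.
by move=> i j ij; rewrite mxE mulr_ge0 ?oQ.
Qed.

(* Under uniformization stability exp(tQ) - 1 lies in M for t > 0, so the
   difference quotients (exp(tQ) - 1 - tQ) / t^2 lie in span M, and so does
   their limit Q^2 / 2. *)
Lemma unif_stable_square Q : unif_stable M -> M Q -> mspan M (Q *m Q).
Proof.
move=> stable MQ; have hV := mspan_subspace M; have [_ [_ VZ]] := hV.
have half_sq : mspan M (2^-1 *: (Q *m Q)).
  apply: (@subspace_closed _ _ _ (fun m => (harmonic m) ^- 2 *:
      (expmx (harmonic m *: Q) - 1%:M - harmonic m *: Q))) => //;
    last by move=> i j; exact: expmx_second_order_limit.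
  move=> m; apply: (VZ).
  have [Qh [MQh ->]] := stable Q MQ (harmonic m) (ltW (harmonic_gt0 m)).
  by apply: subspace_sub => //; [exact: mspan_in | apply: (VZ); exact: mspan_in].
have -> : Q *m Q = 2 *: (2^-1 *: (Q *m Q)).
  by rewrite scalerA mulfV ?scale1r // pnatr_eq0.
exact: (VZ).
Qed.

Lemma unif_stable_jordan : unif_stable M -> jordan_closed (mspan M).
Proof.
move=> stable; apply: jordan_closed_span => [X Y|X]; first exact: model_add.
exact: unif_stable_square.
Qed.

Hypothesis L_zero_row_sum : L `<=` @zero_row_sum R n.

(* Conversely, if span M is a Jordan algebra it contains all positive powers
   of tQ, hence exp(tQ) - 1, which then lies in L; its row sums vanish since
   L consists of zero row sum matrices, and its off-diagonal entries are those
   of the nonnegative matrix exp(tQ). *)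
Lemma jordan_unif_stable : jordan_closed (mspan M) -> unif_stable M.
Proof.
move=> jordan Q MQ t t0; exists (expmx (t *: Q) - 1%:M); split=> //.
have MtQ := model_scale t0 MQ; have [_ [_ off_tQ]] := MtQ.
have L_exp : L (expmx (t *: Q) - 1%:M).
  apply/model_span_sub/(expmx_sub1_in (mspan_subspace M)).
  by apply: (jordan_closed_pow (mspan_subspace M) jordan); exact: mspan_in.
split=> //; split; first exact: L_zero_row_sum.
move=> i j ij; have := expmx_ge0 off_tQ i j.
by move: (expmx (t *: Q)) => E E0; rewrite !mxE (negbTE ij) mulr0n subr0.
Qed.

End LinearMarkovModel.

Theorem mainTheorem1 (R : realType) (n : nat) (L M : set 'M[R]_n) :
  (0 < n)%N ->
  is_subspace L -> L `<=` @zero_row_sum R n ->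
  M = L `&` @rate_matrices R n ->
  M = mspan M `&` @rate_matrices R n /\
  (unif_stable M <-> jordan_closed (mspan M)).
Proof.
move=> _ subspace_L L_zero_row_sum ->; split; first exact: model_span_rate.
split; first exact: unif_stable_jordan.
exact: jordan_unif_stable.
Qed.
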